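(* Let $m\in\mathbb{N}$, $\varphi_k\in(0,\pi)$ and $c_k,d_k\geq0$ for $k=1,\dots,m$, and set $\alpha_k=e^{i\varphi_k}$. If $\cos\varphi_1,\dots,\cos\varphi_m$ are algebraically independent over $\mathbb{Q}$, then the Lévy measure $\sum_{k=1}^m(c_k\delta_{\alpha_k}+d_k\delta_{\bar\alpha_k})$ is L-unique.
   Context: A Lévy measure on $\mathbb{T}$ is a positive Borel measure $\rho$ with $\rho(\{1\})=0$ and $1-\Re s\in L^1(\rho)$. For a Lévy measure $\rho$, $\nu_\circledast^{(1,0,\rho)}$ is the probability measure on $\mathbb{T}$ with $\int s^n\,d\nu=\exp\big(\int_{\mathbb{T}}(s^n-1-in\Im s)\,d\rho(s)\big)$, $n\in\mathbb{Z}$. $\rho$ is L-unique if the only Lévy measure $\widetilde\rho$ with $\nu_\circledast^{(1,0,\widetilde\rho)}=\nu_\circledast^{(1,0,\rho)}$ is $\widetilde\rho=\rho$. *)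

From HB Require Import structures.
From mathcomp Require Import all_boot all_order all_algebra.
From mathcomp Require Import all_classical all_reals all_analysis.
From mathcomp Require mpoly.
Import (canonicals) mpoly.
Set Implicit Arguments. Unset Strict Implicit. Unset Printing Implicit Defensive.
Import Order.TTheory GRing.Theory Num.Theory.
Import numFieldNormedType.Exports.
Local Open Scope classical_set_scope.
Local Open Scope ring_scope.

(* Convention: the unit circle T is parametrized by the angle
   theta in [0, 2 pi) via s = e^{i theta} (a Borel isomorphism).
   A (Borel) measure on T is represented by a measure on R
   carried by [0, 2 pi).  Then: s^n = cos(n theta) + i sin(n theta),
   Re s = cos theta, Im s = sin theta, the point 1 is theta = 0,
   e^{i phi} is theta = phi, and conj(e^{i phi}) is theta = 2 pi - phi
   for phi in (0, pi). *)

Section Defs.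
Context (R : realType).

Definition circ : set R := `[0%R, (2 * pi)%R[.

Definition on_circle (mu : set R -> \bar R) : Prop :=
  mu (~` circ) = 0%E.

Definition levy_measure (rho : {measure set R -> \bar R}) : Prop :=
  [/\ on_circle rho,
      rho [set 0%R] = 0%E &
      rho.-integrable setT (fun t => ((1 - cos t)%R)%:E)].

(* nu is nu_circledast^{(1,0,rho)}: a probability measure on T with
   int s^n dnu = exp( int (s^n - 1 - i n Im s) drho ), for all n in Z.
   With a := int (cos(n t) - 1) drho and b := int (sin(n t) - n sin t) drho,
   exp(a + i b) = e^a cos b + i e^a sin b; real and imaginary parts are
   compared separately. *)
Definition is_nu_levy (rho : {measure set R -> \bar R})
  (nu : probability R R) : Prop :=
  on_circle nu /\
  forall n : int,
    let a := Rintegral rho setT (fun t => cos (n%:~R * t) - 1) in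
    let b := Rintegral rho setT (fun t => sin (n%:~R * t) - n%:~R * sin t) in
    Rintegral nu setT (fun t => cos (n%:~R * t)) = expR a * cos b /\
    Rintegral nu setT (fun t => sin (n%:~R * t)) = expR a * sin b.

Definition same_measure (mu1 mu2 : set R -> \bar R) : Prop :=
  forall A : set R, measurable A -> mu1 A = mu2 A.

Definition L_unique (rho : {measure set R -> \bar R}) : Prop :=
  levy_measure rho /\
  forall (rho' : {measure set R -> \bar R}) (nu nu' : probability R R),
    levy_measure rho' -> is_nu_levy rho nu -> is_nu_levy rho' nu' ->
    same_measure nu nu' -> same_measure rho' rho.

Definition alg_indep_Q (m : nat) (x : 'I_m -> R) : Prop :=
  forall p : mpoly.mpoly m rat,
    mpoly.mmap (@ratr R) x p = 0 -> p = 0.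

End Defs.

From HB Require Import structures.
From mathcomp Require Import all_boot all_order all_algebra.
From mathcomp Require Import all_classical all_reals all_analysis.
From mathcomp Require Import measurable_realfun ring lra.
From mathcomp Require mpoly.
Import (canonicals) mpoly.
Import Order.TTheory GRing.Theory Num.Theory.
Import numFieldNormedType.Exports.
Set Implicit Arguments. Unset Strict Implicit. Unset Printing Implicit Defensive.
Local Open Scope classical_set_scope.
Local Open Scope ring_scope.

(* Write a_n(rho) = int (cos nt - 1) drho and b_n(rho) = int (sin nt - n sin t) drho.
   If the Levy measure rho' gives the same probability measure as rho, comparing
   Fourier coefficients yields a_n(rho') = a_n(rho) and b_n(rho') - b_n(rho) in 2 pi Z.

   The operator s |-> s(n+2) - 2a s(n+1) + s(n) multiplies n |-> sin(th + n ph) by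
   2 (cos ph - a) (up to a shift), so it kills it when a = cos ph; for a = 1 it also
   kills affine sequences.  Applying these operators for the roots 1, cos phi_k, cos phi_k
   to the sequence a_n turns it into the integral of the nonpositive trigonometric
   polynomial 2 (cos t - 1) prod_k (2 (cos t - cos phi_k))^2.  This integral vanishes
   for rho, hence for rho', so rho' is carried by the atoms phi_k and 2 pi - phi_k.
   Linear independence of the sequences cos (n phi_k) then gives c'_k + d'_k = c_k + d_k.
   For the differences, apply the operators with the formal roots 1, X_1, ..., X_m to the
   integers (b_n(rho') - b_n(rho)) / 2 pi: the resulting rational polynomials vanish at
   (cos phi_k)_k, hence identically by algebraic independence, hence also at (1, ..., 1),
   which forces c'_k - d'_k = c_k - d_k. *)

Section SecondDifferences.
Variable V : pzRingType.

Definition diff2 (a : V) (s : nat -> V) : nat -> V :=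
  fun n => s n.+2 - 2 * a * s n.+1 + s n.

Definition diff2s (r : seq V) (s : nat -> V) : nat -> V :=
  foldl (fun s a => diff2 a s) s r.

Lemma diff2s0 (r : seq V) : diff2s r (fun=> 0) = fun=> 0.
Proof.
elim: r => //= a r IHr.
suff -> : diff2 a (fun=> 0) = fun=> 0 by [].
by apply/funext => n; rewrite /diff2 /= mulr0 subr0 addr0.
Qed.

End SecondDifferences.

Lemma rmorph_diff2s (V W : pzRingType) (f : {rmorphism V -> W}) r s n :
  f (diff2s r s n) = diff2s (map f r) (f \o s) n.
Proof.
elim: r s n => //= a r IHr s n; rewrite IHr; congr diff2s.
by apply/funext => k; rewrite /= rmorphD rmorphB !rmorphM rmorph_nat.
Qed.

Section LinearSecondDifferences.
Variable V : comPzRingType.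

Lemma diff2s_sum (I : Type) (rI : seq I) (r : seq V) (g : I -> V) (s : I -> nat -> V) :
  diff2s r (fun n => \sum_(i <- rI) g i * s i n) =
  fun n => \sum_(i <- rI) g i * diff2s r (s i) n.
Proof.
elim: r s => //= a r IHr s; rewrite -IHr; congr diff2s.
apply/funext => n; rewrite /diff2 mulr_sumr -sumrB -big_split /=.
by apply: eq_bigr => i _; ring.
Qed.

Lemma diff2s_scale (r : seq V) (c : V) (s : nat -> V) :
  diff2s r (fun n => c * s n) = fun n => c * diff2s r s n.
Proof.
have := diff2s_sum [:: tt] r (fun=> c) (fun=> s).
by under eq_fun do rewrite big_seq1; under [in RHS]eq_fun do rewrite big_seq1.
Qed.

Lemma diff2_one_affine (s : nat -> V) (u v : V) :
  diff2 1 (fun n => s n + (u + n%:R * v)) = diff2 1 s.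
Proof.
by apply/funext => n; rewrite /diff2 -[n.+2]addn2 -[n.+1]addn1 !natrD; ring.
Qed.

Lemma diff2s_cons1_affine (r : seq V) (s s' : nat -> V) (u v : V) :
  (forall n, s' n = s n + (u + n%:R * v)) -> diff2s (1 :: r) s' = diff2s (1 :: r) s.
Proof. by move=> /funext ->; rewrite /= diff2_one_affine. Qed.

End LinearSecondDifferences.

Lemma periodicz (U V : zmodType) (f : U -> V) (T : U) :
  periodic f T -> forall (n : int) a, f (a + T *~ n) = f a.
Proof.
move=> fT [] n a; first exact: periodicn.
by rewrite NegzE mulrNz -[in RHS](subrK (T *+ n.+1) a) (periodicn fT).
Qed.

Section CircleTrigonometry.
Variable R : realType.
Implicit Types (t u x : R) (n : int).

Lemma cosD_2piZ x n : cos (x + 2 * pi * n%:~R) = cos x.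
Proof. by rewrite mulrzr mulr_natl (periodicz (@cosD2pi R)). Qed.

Lemma sinD_2piZ x n : sin (x + 2 * pi * n%:~R) = sin x.
Proof. by rewrite mulrzr mulr_natl (periodicz (@sinD2pi R)). Qed.

Lemma cos_mul_2piB n x : cos (n%:~R * (2 * pi - x)) = cos (n%:~R * x).
Proof.
by rewrite (_ : _ * _ = - (n%:~R * x) + 2 * pi * n%:~R) ?cosD_2piZ ?cosN //; ring.
Qed.

Lemma sin_mul_2piB n x : sin (n%:~R * (2 * pi - x)) = - sin (n%:~R * x).
Proof.
by rewrite (_ : _ * _ = - (n%:~R * x) + 2 * pi * n%:~R) ?sinD_2piZ ?sinN //; ring.
Qed.

Lemma cos_2piB x : cos (2 * pi - x) = cos x.
Proof. by have := cos_mul_2piB 1 x; rewrite !mul1r. Qed.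

Lemma sin_2piB x : sin (2 * pi - x) = - sin x.
Proof. by have := sin_mul_2piB 1 x; rewrite !mul1r. Qed.

Lemma cos_lt1 t : 0 < t < pi -> cos t < 1.
Proof.
move=> /andP[t_gt0 t_ltpi]; rewrite -cos0 ltr_cos // !in_itv /= ?lexx ?pi_ge0 //.
by rewrite !ltW.
Qed.

Lemma cos_eq_circ t x : 0 <= t < 2 * pi -> 0 <= x <= pi ->
  cos t = cos x -> t = x \/ t = 2 * pi - x.
Proof.
move=> /andP[t_ge0 t_lt2pi] /andP[x_ge0 x_lepi] ctx.
have pi_gt0 := @pi_gt0 R.
have [t_lepi|t_gtpi] := leP t pi.
  by left; apply: cos_inj; rewrite // !in_itv /= ?t_ge0 ?t_lepi ?x_ge0.
right; suff -> : x = 2 * pi - t by ring.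
apply: cos_inj; rewrite ?in_itv /=; first (apply/andP; split=> //).
- by apply/andP; split; lra.
- by rewrite -ctx -[in LHS](cosN t) -(cosD_2piZ (- t) 1) mulr1 addrC.
Qed.

Lemma cos_eq1_2piZ u : cos u = 1 -> exists k : int, u = 2 * pi * k%:~R.
Proof.
move=> cu; have pi_gt0 := @pi_gt0 R.
have two_pi_gt0 : 0 < 2 * pi :> R by lra.
pose k := Num.floor (u / (2 * pi)); exists k.
have := floor_itv (u / (2 * pi)); rewrite -/k intrD => /andP[].
rewrite ler_pdivlMr // ltr_pdivrMr // => kle ltk.
pose v := u - 2 * pi * k%:~R.
have v_itv : 0 <= v < 2 * pi by apply/andP; split; rewrite /v; nra.
have cv : cos v = cos 0 by rewrite cos0 -cu /v -mulrN -intrN cosD_2piZ.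
have zero_itv : 0 <= (0 : R) <= pi by rewrite lexx pi_ge0.
have [v0|v2pi] := cos_eq_circ v_itv zero_itv cv.
  by apply/eqP; rewrite -subr_eq0 -/v v0.
by move: v_itv; rewrite v2pi subr0 ltxx andbF.
Qed.

Lemma circ_cos_eq1 t : circ t -> cos t = 1 -> t = 0.
Proof.
rewrite /circ /= in_itv /= => t_itv; rewrite -cos0 => /(cos_eq_circ t_itv).
rewrite lexx pi_ge0 subr0 => /(_ isT) [//|t2pi].
by move: t_itv; rewrite t2pi ltxx andbF.
Qed.

Lemma cos_sin_eq_2piZ u u' : cos u = cos u' -> sin u = sin u' ->
  exists k : int, u' - u = 2 * pi * k%:~R.
Proof.
by move=> cu su; apply: cos_eq1_2piZ; rewrite cosB -cu -su -!expr2 cos2Dsin2.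
Qed.

Lemma expR_cos_sin_inj (a a' u u' : R) :
  expR a * cos u = expR a' * cos u' -> expR a * sin u = expR a' * sin u' ->
  [/\ a = a', cos u = cos u' & sin u = sin u'].
Proof.
move=> ec es.
have ea : expR a = expR a'.
  apply/eqP; rewrite -(@eqrXn2 _ 2) ?expR_ge0 //; apply/eqP.
  by rewrite -[LHS]mulr1 -(cos2Dsin2 u) -[RHS]mulr1 -(cos2Dsin2 u') !mulrDr -!exprMn ec es.
have ea_neq0 : expR a != 0 by rewrite expR_eq0.
split; first exact: expR_inj.
- by apply: (mulfI ea_neq0); rewrite ec ea.
- by apply: (mulfI ea_neq0); rewrite es ea.
Qed.

Lemma norm_sin_mul_le (k : nat) x : `|sin (k%:R * x)| <= k%:R * `|sin x|.
Proof.
elim: k => [|k IHk]; first by rewrite !mul0r sin0 normr0.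
rewrite -[k.+1]addn1 natrD mulrDl mul1r sinD.
apply: (le_trans (ler_normD _ _)); rewrite !normrM mulrDl mul1r.
apply: lerD; first by apply: (le_trans _ IHk); rewrite ler_piMr // cos_max.
by rewrite ler_piMl // cos_max.
Qed.

Lemma one_minus_cos_half x : 1 - cos x = 2 * sin (x / 2) ^+ 2.
Proof.
rewrite {1}(splitr x) cosD -!expr2 cos2sin2; ring.
Qed.

Lemma one_minus_cos_mul_le n x : 1 - cos (n%:~R * x) <= n%:~R ^+ 2 * (1 - cos x).
Proof.
wlog n_ge0 : n / 0 <= n.
  move=> wlog_n; have [/wlog_n //|/ltW n_le0] := lerP 0 n.
  by have := wlog_n (- n); rewrite oppr_ge0 n_le0 mulrNz mulNr cosN sqrrN; apply.
case: n n_ge0 => // k _; rewrite !one_minus_cos_half.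
have sin_sq : sin (k%:R * (x / 2)) ^+ 2 <= k%:R ^+ 2 * sin (x / 2) ^+ 2.
  rewrite -[sin (k%:R * _) ^+ 2]real_normK ?num_real //.
  rewrite -[sin (x / 2) ^+ 2]real_normK ?num_real //.
  by rewrite -exprMn lerXn2r ?nnegrE ?mulr_ge0 // norm_sin_mul_le.
by rewrite -pmulrn -mulrA; nra.
Qed.

End CircleTrigonometry.

Section TrigonometricSequences.
Variable R : realType.

Definition symbol (r : seq R) (t : R) : R := \prod_(a <- r) (2 * (cos t - a)).

Lemma symbol_eq0 (r : seq R) (t : R) : (symbol r t == 0) = (cos t \in r).
Proof.
rewrite /symbol prodf_seq_eq0; apply/hasP/idP => [[a ar /=]|ctr].
  by rewrite mulf_eq0 pnatr_eq0 subr_eq0 => /eqP ->.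
by exists (cos t) => //=; rewrite subrr mulr0.
Qed.

Lemma diff2_sin (a th ph : R) :
  diff2 a (fun n => sin (th + n%:R * ph)) =
  fun n => 2 * (cos ph - a) * sin ((th + ph) + n%:R * ph).
Proof.
apply/funext => n; rewrite /diff2.
set u := (th + ph) + n%:R * ph.
have -> : th + n.+2%:R * ph = u + ph by rewrite /u -[n.+2]addn2 natrD; ring.
have -> : th + n.+1%:R * ph = u by rewrite /u -[n.+1]addn1 natrD; ring.
have -> : th + n%:R * ph = u - ph by rewrite /u; ring.
rewrite sinD sinB; ring.
Qed.

Lemma diff2s_sin (r : seq R) (th ph : R) :
  diff2s r (fun n => sin (th + n%:R * ph)) =
  fun n => symbol r ph * sin ((th + (size r)%:R * ph) + n%:R * ph).
Proof.
elim: r th => [|a r IHr] th /=.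
  by apply/funext => n; rewrite /symbol big_nil mul1r mul0r addr0.
rewrite diff2_sin diff2s_scale IHr; apply/funext => n.
rewrite /symbol big_cons mulrA -[(size r).+1]addn1 natrD; congr (_ * sin _); ring.
Qed.

Lemma diff2s_sum_sin (m : nat) (r : seq R) (g th ph : 'I_m -> R) :
  diff2s r (fun n => \sum_(k < m) g k * sin (th k + n%:R * ph k)) =
  fun n => \sum_(k < m) (g k * symbol r (ph k)) *
             sin ((th k + (size r)%:R * ph k) + n%:R * ph k).
Proof.
rewrite diff2s_sum; apply/funext => n; apply: eq_bigr => k _.
by rewrite diff2s_sin mulrA.
Qed.

Lemma sin_sinD_neq0 (u ph : R) : 0 < sin ph -> sin u = 0 -> sin (u + ph) != 0.
Proof.
move=> sph su; rewrite sinD su mul0r add0r mulf_neq0 ?(gt_eqF sph) //.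
by rewrite -normr_eq0 (sin0cos1 su) oner_neq0.
Qed.

Lemma sin_lin_indep (m : nat) (g th ph : 'I_m -> R) :
  (forall k, 0 < ph k < pi) -> injective (fun k => cos (ph k)) ->
  (forall n : nat, \sum_(k < m) g k * sin (th k + n%:R * ph k) = 0) ->
  forall k, g k = 0.
Proof.
move=> ph_itv cos_inj sum0 j.
pose r := [seq cos (ph k) | k <- enum 'I_m & k != j].
have cosj_notin : cos (ph j) \notin r.
  apply/mapP => -[k]; rewrite mem_filter => /andP[kj _] /cos_inj jk.
  by rewrite jk eqxx in kj.
have diff2s_j n : (g j * symbol r (ph j)) *
    sin ((th j + (size r)%:R * ph j) + n%:R * ph j) = 0.
  have := congr1 (fun s => s n) (diff2s_sum_sin r g th ph).
  rewrite (_ : (fun n => _) = fun=> 0); last exact/funext.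
  rewrite diff2s0 (bigD1 j) //= big1 ?addr0 => [<- //|k kj].
  have /eqP -> : symbol r (ph k) == 0.
    by rewrite symbol_eq0; apply: map_f; rewrite mem_filter kj mem_enum.
  by rewrite mulr0 mul0r.
apply/eqP; apply: contraT => gj_neq0.
have gsj_neq0 : g j * symbol r (ph j) != 0 by rewrite mulf_neq0 ?symbol_eq0.
have sin_j n : sin ((th j + (size r)%:R * ph j) + n%:R * ph j) = 0.
  by apply/eqP; have /eqP := diff2s_j n; rewrite mulf_eq0 (negbTE gsj_neq0).
have := sin_j 0%N; rewrite mul0r addr0 => /(sin_sinD_neq0 (sin_gt0_pi (ph_itv j))).
by have := sin_j 1%N; rewrite mul1r => ->; rewrite eqxx.
Qed.

Lemma symbol_cons1_cat_le0 (r : seq R) (t : R) : symbol (1 :: r ++ r) t <= 0.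
Proof.
by rewrite /symbol big_cons big_cat /= -expr2 mulr_le0_ge0 ?sqr_ge0.
Qed.

Lemma diff2s_cos_shift (r : seq R) (t : R) :
  diff2s (1 :: r) (fun j => cos ((j%:Z - (size (1 :: r))%:Z)%:~R * t) - 1) 0 =
  symbol (1 :: r) t.
Proof.
set J := size (1 :: r).
rewrite (@diff2s_cons1_affine _ _ (fun j => sin ((pi / 2 - J%:R * t) + j%:R * t)) _ (-1) 0).
  by rewrite diff2s_sin mul0r addr0 -/J subrK sin_pihalf mulr1.
move=> j; rewrite mulr0 addr0 intrB -!pmulrn.
rewrite (_ : pi / 2 - J%:R * t + j%:R * t = (j%:R - J%:R) * t + pi / 2) ?sinDpihalf //.
by ring.
Qed.

End TrigonometricSequences.

Lemma sin_affine_lin_indep (R : realType) (m : nat) (g th ph : 'I_m -> R) (u v : R) :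
  (forall k, 0 < ph k < pi) -> injective (fun k => cos (ph k)) ->
  (forall n : nat, \sum_(k < m) g k * sin (th k + n%:R * ph k) + (u + n%:R * v) = 0) ->
  forall k, g k = 0.
Proof.
move=> ph_itv cos_inj sum0 k.
have := @diff2s_cons1_affine _ [::] _ (fun=> 0) u v (fun n => esym (sum0 n)).
rewrite diff2s0 diff2s_sum_sin => sum1_0.
have /(_ k) /eqP := sin_lin_indep ph_itv cos_inj
  (fun n => esym (congr1 (fun s => s n) sum1_0)).
rewrite mulf_eq0 symbol_eq0 mem_seq1 => /orP[/eqP //|/eqP cos1].
by have := cos_lt1 (ph_itv k); rewrite cos1 ltxx.
Qed.

Section AlgebraicIndependence.
Variables (R : realType) (m : nat).

Lemma alg_indep_Q_inj (x : 'I_m -> R) : alg_indep_Q x -> injective x.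
Proof.
move=> indep i j xij; apply/eqP; apply: contraT => ij.
have := indep (mpoly.mpolyX rat (mpoly.mnm1 i) - mpoly.mpolyX rat (mpoly.mnm1 j)).
rewrite mpoly.mmapB !mpoly.mmapX !mpoly.mmap1U xij subrr => /(_ erefl).
move/(congr1 (mpoly.mcoeff (mpoly.mnm1 i))).
rewrite mpoly.mcoeffB !mpoly.mcoeffXU eqxx eq_sym (negbTE ij) subr0 => /eqP.
by rewrite raddf0 oner_eq0.
Qed.

Lemma sum_sin_2piZ_eq0 (ph e : 'I_m -> R) (z : nat -> int) :
  (forall k, 0 < ph k < pi) -> alg_indep_Q (fun k => cos (ph k)) ->
  (forall n : nat, \sum_(k < m) e k * (sin (n%:R * ph k) - n%:R * sin (ph k)) =
                   2 * pi * (z n)%:~R) ->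
  forall k, e k = 0.
Proof.
move=> ph_itv indep sumE.
have two_pi_neq0 : 2 * pi != 0 :> R by rewrite mulf_neq0 // gt_eqF ?pi_gt0.
have cos_inj := alg_indep_Q_inj indep.
pose S := \sum_(k < m) e k * sin (ph k).
pose F n := \sum_(k < m) e k * sin (0 + n%:R * ph k) + (0 + n%:R * - S).
have FE n : F n = 2 * pi * (z n)%:~R.
  rewrite -sumE /F /S !add0r mulrN mulr_sumr -sumrN -big_split /=.
  by apply: eq_bigr => k _; rewrite add0r; ring.
have zE : (fun n => ((z n)%:~R : R)) = fun n => (2 * pi)^-1 * F n.
  by apply/funext => n; rewrite FE mulrA mulVf ?mul1r.
pose X := 1 :: [seq mpoly.mpolyX rat (mpoly.mnm1 k) | k <- enum 'I_m].
pose W n := diff2s X (fun j => ((z j)%:~R : mpoly.mpoly m rat)) n.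
have evalW (y : 'I_m -> R) n : mpoly.mmap (@ratr R) y (W n) =
    (2 * pi)^-1 * diff2s (1 :: [seq y k | k <- enum 'I_m]) F n.
  rewrite rmorph_diff2s (_ : _ \o _ = fun j => (z j)%:~R); last first.
    by apply/funext => j /=; rewrite rmorph_int.
  rewrite [map _ _]/= rmorph1 -map_comp zE diff2s_scale.
  congr (_ * diff2s (_ :: _) _ _).
  by apply: eq_map => k /=; rewrite mpoly.mmapX mpoly.mmap1U.
have W0 n : W n = 0.
  apply: indep; rewrite evalW (diff2s_cons1_affine _ (fun n => erefl)) diff2s_sum_sin.
  rewrite big1 ?mulr0 // => k _.
  have /eqP -> : symbol (1 :: [seq cos (ph k) | k <- enum 'I_m]) (ph k) == 0.
    by rewrite symbol_eq0 inE map_f ?mem_enum ?orbT.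
  by rewrite mulr0 mul0r.
pose ones : seq R := [seq 1 | _ <- enum 'I_m].
have sum1_0 n : \sum_(k < m) (e k * symbol (1 :: ones) (ph k)) *
    sin ((0 + (size (1 :: ones))%:R * ph k) + n%:R * ph k) = 0.
  have /eqP := evalW (fun=> 1) n; rewrite W0 rmorph0 eq_sym mulf_eq0 invr_eq0.
  rewrite (negbTE two_pi_neq0) orFb (diff2s_cons1_affine _ (fun n => erefl)).
  by rewrite diff2s_sum_sin => /eqP.
move=> k; have /(_ k) /eqP := sin_lin_indep ph_itv cos_inj sum1_0.
rewrite mulf_eq0 symbol_eq0 => /orP[/eqP //|]; rewrite inE => /predU1P[cos1|].
  by have := cos_lt1 (ph_itv k); rewrite cos1 ltxx.
by move=> /mapP[? _ cos1]; have := cos_lt1 (ph_itv k); rewrite cos1 ltxx.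
Qed.

End AlgebraicIndependence.

Lemma sum_enum_val (V : nmodType) (I : finType) (F : I -> V) :
  \sum_i F i = \sum_(j < #|I|) F (enum_val j).
Proof. by rewrite -(big_enum_val_cond predT). Qed.

Section AtomicMeasures.
Local Open Scope ereal_scope.
Context d (T : measurableType d) (R : realType) (I : finType).
Variables (mu : {measure set T -> \bar R}) (w : I -> R) (p : I -> T).
Hypothesis w_ge0 : forall i, (0 <= w i)%R.
Hypothesis muE : forall A, measurable A -> mu A = \sum_i (w i)%:E * \d_(p i) A.

Lemma ge0_integral_atomic (g : T -> \bar R) :
  measurable_fun setT g -> (forall x, 0 <= g x) ->
  \int[mu]_x g x = \sum_i (w i)%:E * g (p i).
Proof.
move=> mg g_ge0.
pose atom (j : nat) : {measure set T -> \bar R} :=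
  if (insub j : option 'I_#|I|) is Some k then
    mscale (NngNum (w_ge0 (enum_val k))) \d_(p (enum_val k))
  else mzero.
rewrite (eq_measure_integral (msum atom #|I|)); last first.
  move=> A mA _; rewrite muE // /msum sum_enum_val.
  by apply: eq_bigr => j _; rewrite /atom valK.
rewrite ge0_integral_measure_sum // [RHS]sum_enum_val.
apply: eq_bigr => j _; rewrite /atom valK /= ge0_integral_mscale //.
by rewrite integral_dirac // diracT mul1e.
Qed.

Lemma integrable_atomic (f : T -> R) :
  measurable_fun setT f -> mu.-integrable setT (EFin \o f).
Proof.
move=> mf; apply/integrableP; split; first exact/measurable_EFinP.
rewrite ge0_integral_atomic //; last exact/measurableT_comp/measurable_EFinP.
rewrite (eq_bigr (fun i => (w i * `|f (p i)|)%:E)) => [|i _]; last first.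
  by rewrite EFinM.
by rewrite sumEFin ltry.
Qed.

Lemma Rintegral_atomic (f : T -> R) :
  measurable_fun setT f -> Rintegral mu setT f = (\sum_i w i * f (p i))%R.
Proof.
have ge0E (g : T -> R) : measurable_fun setT g -> (forall x, 0 <= g x)%R ->
    Rintegral mu setT g = (\sum_i w i * g (p i))%R.
  move=> mg g_ge0; rewrite /Rintegral ge0_integral_atomic //.
  - by under eq_bigr do rewrite -EFinM; rewrite sumEFin.
  - exact/measurable_EFinP.
move=> mf; have mnf : measurable_fun setT (fun x => `|f x|)%R.
  exact: measurableT_comp (@normr_measurable _ _) mf.
have mnff : measurable_fun setT (fun x => `|f x| - f x)%R by exact: measurable_funB.
rewrite (_ : f = fun x => `|f x| - (`|f x| - f x))%R; last by apply/funext => x; ring.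
rewrite RintegralB ?integrable_atomic // !ge0E // => [|x]; last first.
  by rewrite subr_ge0 ler_norm.
by rewrite -sumrB; apply: eq_bigr => i _; ring.
Qed.

End AtomicMeasures.

Section FiniteSupport.
Local Open Scope ereal_scope.
Context d (T : measurableType d) (R : realType) (mu : {measure set T -> \bar R}).

Lemma measureI_set1 (A : set T) (x : T) :
  measurable A -> mu (A `&` [set x]) = mu [set x] * \d_x A.
Proof.
move=> mA; rewrite diracE; have [/set_mem Ax|/negP Ax] := boolP (x \in A).
  by rewrite mule1 setIidr // => _ ->.
rewrite mule0 (_ : _ `&` _ = set0) ?measure0 //.
by apply/seteqP; split => // y [Ay /= yx]; apply: Ax; rewrite -yx; exact: mem_set.
Qed.

Lemma measure_finite_support (I : finType) (p : I -> T) (N : set T) :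
  injective p -> (forall i, measurable [set p i]) ->
  measurable N -> mu N = 0 -> ~` range p `<=` N ->
  forall A, measurable A -> mu A = \sum_i mu [set p i] * \d_(p i) A.
Proof.
move=> p_inj mp mN N0 Np A mA.
have unionE B : B `&` range p = \big[setU/set0]_(j < #|I|) (B `&` [set p (enum_val j)]).
  rewrite -bigcup_seq; apply/seteqP; split => [x [Bx [i _ ix]]|x [j _ [Bx xj]]].
    exists (enum_rank i); first exact: mem_index_enum.
    by rewrite enum_rankK; split.
  by rewrite xj in Bx *; split => //; exists (enum_val j).
have mI B : measurable B -> measurable (B `&` range p).
  by move=> mB; rewrite unionE; apply: bigsetU_measurable => j _; exact: measurableI.
have mp_range : measurable (range p) by rewrite -[range p]setTI; exact: mI.
have -> : mu A = mu (A `&` range p).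
  rewrite -{1}(setUIDK A (range p)) measureU0 //; first exact: mI.
    exact: measurableD.
  apply: (subset_measure0 _ mN) => //; first exact: measurableD.
  by move=> x [_ /Np].
rewrite unionE measure_bigsetU_ord => [|j|i j _ _ [x [[_ /= ->] [_ /= /p_inj]]]].
- by rewrite [RHS]sum_enum_val; apply: eq_bigr => j _; rewrite /= measureI_set1.
- exact: measurableI.
- exact: enum_val_inj.
Qed.

Lemma integrable_set1_fin_num (f : T -> R) (x : T) :
  measurable [set x] -> mu.-integrable setT (EFin \o f) -> f x != 0%R ->
  mu [set x] \is a fin_num.
Proof.
move=> mx /integrableP[mf int_f] fx_neq0.
have fx_gt0 : (0 < `|f x|)%R by rewrite normr_gt0.
have le_int : `|f x|%:E * mu [set x] <= \int[mu]_t `|(EFin \o f) t|.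
  apply: le_trans (le_integral_abse mu measurableT mf fx_gt0).
  apply: lee_wpmul2l; first by rewrite lee_fin.
  apply: le_measure; rewrite ?inE //; last by move=> t /= ->.
  by apply: emeasurable_fun_c_infty => //; exact: measurableT_comp.
have := le_lt_trans le_int int_f; rewrite ge0_fin_numE //.
by case: (mu [set x]) => [r||] //; rewrite ?ltry // (@gt0_muley R `|f x|%:E) ?lte_fin.
Qed.

Lemma nonpos_Rintegral0_ae (f : T -> R) :
  mu.-integrable setT (EFin \o f) -> (forall t, f t <= 0)%R ->
  Rintegral mu setT f = 0%R -> {ae mu, forall t, f t = 0%R}.
Proof.
move=> intf f_le0 intf0; have mf := measurable_int mu intf.
have int_abs0 : \int[mu]_t `|(EFin \o f) t| = 0.
  transitivity (\int[mu]_t ((-1)%:E * (EFin \o f) t)).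
    by apply: eq_integral => t _; rewrite /= ler0_norm ?f_le0 // mulN1e EFinN.
  rewrite integralZl // -[\int[mu]_t _]fineK ?integrable_fin_num //.
  by rewrite -/(Rintegral _ _ _) intf0 mule0.
apply: filterS ((ae_eq_integral_abs mu measurableT mf).1 int_abs0) => t.
by move=> /(_ I) [].
Qed.

End FiniteSupport.

Section SameIntegral.
Context d (T : measurableType d) (R : realType) (mu1 mu2 : {measure set T -> \bar R}).

Definition same_integral (f : T -> R) : Prop :=
  [/\ mu1.-integrable setT (EFin \o f), mu2.-integrable setT (EFin \o f) &
      Rintegral mu1 setT f = Rintegral mu2 setT f].

Lemma same_integralD (f g : T -> R) :
  same_integral f -> same_integral g -> same_integral (fun t => f t + g t).
Proof.
move=> [f1 f2 ef] [g1 g2 eg].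
have EFinfg : EFin \o (fun t => f t + g t) = (EFin \o f) \+ (EFin \o g).
  by apply/funext => t; rewrite /= EFinD.
split; [rewrite EFinfg; exact: integrableD..|].
by rewrite !RintegralD // ef eg.
Qed.

Lemma same_integralZ (c : R) (f : T -> R) :
  same_integral f -> same_integral (fun t => c * f t).
Proof.
move=> [f1 f2 ef].
have EFincf : EFin \o (fun t => c * f t) = fun t => (c%:E * (EFin \o f) t)%E.
  by apply/funext => t; rewrite /= EFinM.
split; [rewrite EFincf; exact: integrableZl..|].
by rewrite !RintegralZl // ef.
Qed.

Lemma same_integral_diff2s (r : seq R) (S : nat -> T -> R) :
  (forall j, same_integral (S j)) ->
  forall n, same_integral (fun t => diff2s r (S ^~ t) n).
Proof.
elim: r S => [|a r IHr] S S_same n //=.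
apply: (IHr (fun j t => diff2 a (S ^~ t) j)) => j.
apply: same_integralD; last exact: S_same.
rewrite /diff2 (_ : (fun t => _) = fun t => S j.+2 t + (- (2 * a)) * S j.+1 t).
  by apply: same_integralD; [|apply: same_integralZ].
by apply/funext => t; rewrite mulNr.
Qed.

End SameIntegral.

Section LevyMeasures.
Variable R : realType.
Implicit Types (rho : {measure set R -> \bar R}) (n : int).

Lemma measurable_cos_mul (r : R) : measurable_fun setT (fun t : R => cos (r * t)).
Proof.
apply: measurableT_comp (continuous_measurable_fun (@continuous_cos R)) _.
exact: measurable_funM.
Qed.

Lemma measurable_sin_mul (r : R) : measurable_fun setT (fun t : R => sin (r * t)).
Proof.
apply: measurableT_comp (continuous_measurable_fun (@continuous_sin R)) _.
exact: measurable_funM.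
Qed.

Lemma measurable_levy_cos n : measurable_fun setT (fun t : R => cos (n%:~R * t) - 1).
Proof. exact: measurable_funB (measurable_cos_mul _) (measurable_cst _). Qed.

Lemma measurable_levy_sin n :
  measurable_fun setT (fun t : R => sin (n%:~R * t) - n%:~R * sin t).
Proof.
apply: measurable_funB (measurable_sin_mul _) _; apply: measurable_funM => //.
by have := measurable_sin_mul 1; under eq_fun do rewrite mul1r.
Qed.

Lemma levy_integrable_cos rho n : levy_measure rho ->
  rho.-integrable setT (EFin \o (fun t => cos (n%:~R * t) - 1)).
Proof.
move=> [_ _ int_cos].
apply: (le_integrable measurableT (g := fun t => (n%:~R ^+ 2 * (1 - cos t))%:E)).
- by apply/measurable_EFinP; exact: measurable_levy_cos.
- move=> t _ /=; rewrite lee_fin ler0_norm ?subr_le0 ?cos_le1 // opprB ger0_norm.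
    exact: one_minus_cos_mul_le.
  by rewrite mulr_ge0 ?sqr_ge0 ?subr_ge0 ?cos_le1.
- under eq_fun do rewrite EFinM; exact: integrableZl.
Qed.

Lemma levy_measure_atomic (I : finType) rho (w : I -> R) (p : I -> R) :
  (forall i, 0 <= w i) -> (forall i, circ (p i)) -> (forall i, p i != 0) ->
  (forall A, measurable A -> rho A = (\sum_i (w i)%:E * \d_(p i) A)%E) ->
  levy_measure rho.
Proof.
move=> w_ge0 p_circ p_neq0 rhoE; split.
- rewrite /on_circle rhoE; last by apply: measurableC; exact: measurable_itv.
  by rewrite big1 // => i _; rewrite diracE memNset ?mule0 //= => /(_ (p_circ i)).
- rewrite rhoE; last exact: measurable_set1.
  by rewrite big1 // => i _; rewrite diracE memNset ?mule0 //= => /eqP; apply/negP.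
- apply: (integrable_atomic w_ge0 rhoE (f := fun t => 1 - cos t)).
  by apply: measurable_funB => //; exact: continuous_measurable_fun (@continuous_cos R).
Qed.

Lemma levy_exponent_eq rho rho' (nu nu' : probability R R) :
  is_nu_levy rho nu -> is_nu_levy rho' nu' -> same_measure nu nu' ->
  forall n,
    Rintegral rho' setT (fun t => cos (n%:~R * t) - 1) =
      Rintegral rho setT (fun t => cos (n%:~R * t) - 1) /\
    exists k : int,
      Rintegral rho' setT (fun t => sin (n%:~R * t) - n%:~R * sin t) -
      Rintegral rho setT (fun t => sin (n%:~R * t) - n%:~R * sin t) = 2 * pi * k%:~R.
Proof.
move=> [_ nuE] [_ nu'E] nu_nu' n.
have nu_nu'_int f : Rintegral nu setT f = Rintegral nu' setT f.
  by rewrite /Rintegral (eq_measure_integral nu') // => A mA _; exact: nu_nu'.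
have [cos_nu sin_nu] := nuE n; have [cos_nu' sin_nu'] := nu'E n.
rewrite nu_nu'_int in cos_nu; rewrite nu_nu'_int in sin_nu.
have [-> cosE sinE] := expR_cos_sin_inj (etrans (esym cos_nu') cos_nu)
  (etrans (esym sin_nu') sin_nu).
by split => //; apply: cos_sin_eq_2piZ.
Qed.

Lemma levy_symbol_ae0 (I : finType) rho rho' (w : I -> R) (p : I -> R) (xs : seq R) :
  (forall i, 0 <= w i) ->
  (forall A, measurable A -> rho A = (\sum_i (w i)%:E * \d_(p i) A)%E) ->
  (forall i, cos (p i) \in xs) -> levy_measure rho' ->
  (forall n, Rintegral rho' setT (fun t => cos (n%:~R * t) - 1) =
             Rintegral rho setT (fun t => cos (n%:~R * t) - 1)) ->
  {ae rho', forall t, symbol (1 :: xs ++ xs) t = 0}.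
Proof.
move=> w_ge0 rhoE cos_p rho'_levy cos_eq.
pose S (j : nat) (t : R) : R := cos ((j%:Z - (size (1 :: xs ++ xs))%:Z)%:~R * t) - 1.
have S_same j : same_integral rho' rho (S j).
  split; first exact: levy_integrable_cos.
    exact: (integrable_atomic w_ge0 rhoE (measurable_levy_cos _)).
  exact: cos_eq.
have [int_sym _ sym_eq] := same_integral_diff2s (1 :: xs ++ xs) S_same 0%N.
have symE : (fun t => diff2s (1 :: xs ++ xs) (S ^~ t) 0) = symbol (1 :: xs ++ xs).
  by apply/funext => t; exact: diff2s_cos_shift.
rewrite symE in int_sym sym_eq.
apply: nonpos_Rintegral0_ae => //; first exact: symbol_cons1_cat_le0.
rewrite sym_eq (Rintegral_atomic w_ge0 rhoE); last first.
  exact: (measurable_EFinP _ _).1 (measurable_int _ int_sym).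
rewrite big1 // => i _; have /eqP -> : symbol (1 :: xs ++ xs) (p i) == 0.
  by rewrite symbol_eq0 in_cons mem_cat cos_p !orbT.
by rewrite mulr0.
Qed.

Lemma levy_atomic_support (I : finType) rho rho' (w p : I -> R) (xs : seq R) :
  (forall i, 0 <= w i) ->
  (forall A, measurable A -> rho A = (\sum_i (w i)%:E * \d_(p i) A)%E) ->
  injective p -> (forall i, circ (p i)) -> (forall i, p i != 0) ->
  (forall i, cos (p i) \in xs) -> (forall t, circ t -> cos t \in xs -> range p t) ->
  levy_measure rho' ->
  (forall n, Rintegral rho' setT (fun t => cos (n%:~R * t) - 1) =
             Rintegral rho setT (fun t => cos (n%:~R * t) - 1)) ->
  exists2 w' : I -> R, forall i, 0 <= w' i &
    forall A, measurable A -> rho' A = (\sum_i (w' i)%:E * \d_(p i) A)%E.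
Proof.
move=> w_ge0 rhoE p_inj p_circ p_neq0 cos_p p_level rho'_levy cos_eq.
have [N [mN N0 symN]] := levy_symbol_ae0 w_ge0 rhoE cos_p rho'_levy cos_eq.
have [rho'_circ rho'0 int_cos] := rho'_levy.
have mcirc : measurable (~` @circ R) by apply: measurableC; exact: measurable_itv.
have mZ : measurable (~` @circ R `|` [set 0]).
  by apply: measurableU => //; exact: measurable_set1.
have rho'E : forall A, measurable A -> rho' A = (\sum_i rho' [set p i] * \d_(p i) A)%E.
  apply: (measure_finite_support (N := (~` @circ R `|` [set 0]) `|` N) p_inj).
  - by move=> i; exact: measurable_set1.
  - exact: measurableU.
  - by rewrite measureU0 // measureU0 //; exact: measurable_set1.
  move=> t /= t_notin_p; have [t_circ|] := pselect (circ t); last by left; left.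
  have [->|t_neq0] := eqVneq t 0; first by left; right.
  right; apply: symN => /eqP; rewrite symbol_eq0 in_cons mem_cat orbb.
  case/predU1P => [/(circ_cos_eq1 t_circ) t0|/(p_level _ t_circ) //].
  by rewrite t0 eqxx in t_neq0.
have rho'_fin i : rho' [set p i] \is a fin_num.
  apply: integrable_set1_fin_num (measurable_set1 _) int_cos _.
  rewrite subr_eq0 eq_sym; apply: contra (p_neq0 i).
  by move=> /eqP /(circ_cos_eq1 (p_circ i)) ->.
exists (fun i => fine (rho' [set p i])) => [i|A mA]; first exact/fine_ge0/measure_ge0.
by rewrite rho'E //; apply: eq_bigr => i _; rewrite fineK.
Qed.


End LevyMeasures.

Definition sum_case (A B C : Type) (f : A -> C) (g : B -> C) (x : A + B) : C :=
  match x with inl a => f a | inr b => g b end.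

Section ConjugateAtoms.
Variables (R : realType) (m : nat) (phi : 'I_m -> R).
Hypothesis phi_itv : forall k, 0 < phi k < pi.

Definition conj_atom : 'I_m + 'I_m -> R := sum_case phi (fun k => 2 * pi - phi k).

Let cos_phis := [seq cos (phi k) | k <- enum 'I_m].

Lemma conj_atom_itv i : 0 < conj_atom i < 2 * pi.
Proof. by case: i => k /=; have := phi_itv k; have := @pi_gt0 R; lra. Qed.

Lemma conj_atom_circ i : circ (conj_atom i).
Proof.
have /andP[? ?] := conj_atom_itv i.
by rewrite /circ /= in_itv /=; apply/andP; split; [exact: ltW|].
Qed.

Lemma conj_atom_neq0 i : conj_atom i != 0.
Proof. by have /andP[/gt_eqF ->] := conj_atom_itv i. Qed.

Lemma cos_conj_atom i : cos (conj_atom i) \in cos_phis.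
Proof. by case: i => k /=; rewrite ?cos_2piB map_f ?mem_enum. Qed.

Lemma conj_atom_level t : circ t -> cos t \in cos_phis -> range conj_atom t.
Proof.
rewrite /circ /= in_itv /= => t_itv /mapP[k _ ctk].
have phik_itv : 0 <= phi k <= pi by have /andP[? ?] := phi_itv k; rewrite !ltW.
have [tk|tk] := cos_eq_circ t_itv phik_itv ctk.
- by exists (inl k).
- by exists (inr k).
Qed.

Lemma conj_atom_inj : injective (fun k => cos (phi k)) -> injective conj_atom.
Proof.
move=> cos_inj [] i [] j /= eq_ij; have := phi_itv i; have := phi_itv j.
- by rewrite (cos_inj i j) //= eq_ij.
- by move=> ? ?; exfalso; move: eq_ij; lra.
- by move=> ? ?; exfalso; move: eq_ij; lra.
- by move=> _ _; rewrite (cos_inj i j) //= (_ : phi i = phi j) //; lra.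
Qed.

Lemma conj_atom_weights_eq (w w' : 'I_m + 'I_m -> R) :
  alg_indep_Q (fun k => cos (phi k)) ->
  (forall n : int, \sum_i w' i * (cos (n%:~R * conj_atom i) - 1) =
                   \sum_i w i * (cos (n%:~R * conj_atom i) - 1)) ->
  (forall n : int, exists z : int,
     \sum_i w' i * (sin (n%:~R * conj_atom i) - n%:~R * sin (conj_atom i)) -
     \sum_i w i * (sin (n%:~R * conj_atom i) - n%:~R * sin (conj_atom i)) =
     2 * pi * z%:~R) ->
  w' = w.
Proof.
move=> indep cos_eq sin_eq; have cos_inj := alg_indep_Q_inj indep.
pose r k := (w' (inl k) + w' (inr k)) - (w (inl k) + w (inr k)).
pose e k := (w' (inl k) - w' (inr k)) - (w (inl k) - w (inr k)).
have r0 : forall k, r k = 0.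
  apply: (@sin_affine_lin_indep _ _ _ (fun=> pi / 2) _ (- \sum_k r k) 0 phi_itv cos_inj).
  move=> n; have /eqP := cos_eq n; rewrite -subr_eq0 !big_sumType /= => /eqP sum0.
  rewrite mulr0 addr0 -sumrN -big_split -[RHS]sum0 -!big_split -sumrB /=.
  apply: eq_bigr => k _; rewrite cos_mul_2piB -pmulrn (addrC (pi / 2)) sinDpihalf /r.
  by ring.
have e0 : forall k, e k = 0.
  have sin_int (n : nat) : exists z : int,
      \sum_k e k * (sin (n%:R * phi k) - n%:R * sin (phi k)) = 2 * pi * z%:~R.
    have [z zE] := sin_eq n; exists z; rewrite -zE !big_sumType /= -!big_split -sumrB /=.
    by apply: eq_bigr => k _; rewrite sin_mul_2piB sin_2piB -pmulrn /e; ring.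
  have [z zE] := choice sin_int.
  exact: sum_sin_2piZ_eq0 phi_itv indep zE.
by apply/funext => -[] k; have := r0 k; have := e0 k; rewrite /r /e /=; lra.
Qed.

End ConjugateAtoms.

Theorem theorem8p8 (R : realType) (m : nat) (phi c d : 'I_m -> R)
  (rho : {measure set R -> \bar R}) :
  (forall k, 0 < phi k < pi) ->
  (forall k, 0 <= c k) -> (forall k, 0 <= d k) ->
  alg_indep_Q (fun k => cos (phi k)) ->
  (forall A : set R, measurable A ->
     rho A = (\sum_(k < m) ((c k)%:E * \d_(phi k) A
                            + (d k)%:E * \d_((2 * pi - phi k)%R) A))%E) ->
  L_unique rho.
Proof.
move=> phi_itv c_ge0 d_ge0 indep rhoE.
pose w := sum_case c d.
have w_ge0 i : 0 <= w i by case: i.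
have rhoE' A : measurable A -> rho A = (\sum_i (w i)%:E * \d_(conj_atom phi i) A)%E.
  by move=> mA; rewrite rhoE // big_split big_sumType.
have p_circ := conj_atom_circ phi_itv; have p_neq0 := conj_atom_neq0 phi_itv.
split=> [|rho' nu nu' rho'_levy nuE nu'E nu_nu'].
  exact: levy_measure_atomic w_ge0 p_circ p_neq0 rhoE'.
have exponentE := levy_exponent_eq nuE nu'E nu_nu'.
have [w' w'_ge0 rho'E] := levy_atomic_support w_ge0 rhoE'
  (conj_atom_inj phi_itv (alg_indep_Q_inj indep)) p_circ p_neq0
  (cos_conj_atom phi) (conj_atom_level phi_itv) rho'_levy
  (fun n => (exponentE n).1).
have w'E : w' = w.
  apply: (conj_atom_weights_eq phi_itv indep) => n.
    rewrite -(Rintegral_atomic w'_ge0 rho'E (measurable_levy_cos n)).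
    by rewrite -(Rintegral_atomic w_ge0 rhoE' (measurable_levy_cos n)); case: (exponentE n).
  rewrite -(Rintegral_atomic w'_ge0 rho'E (measurable_levy_sin n)).
  by rewrite -(Rintegral_atomic w_ge0 rhoE' (measurable_levy_sin n)); case: (exponentE n).
by move=> A mA; rewrite rho'E // w'E -rhoE'.
Qed.
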